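(* Let $D = (D_1\xrightarrow{\partial^D} D_0)$ be a two-term chain complex and $C$ a two- or three-term chain complex, both of finite-dimensional $\mathbb{F}_2$-vector spaces with chosen bases. Consider a modular architecture whose modules are indexed by the basis elements of $D_1\oplus D_0$, each module containing one qubit for each basis element of $\bigoplus_i C_i$, with connectivity as follows: (intra-modular) in every module, the qubit labelled $c$ is connected to the qubit labelled $c'$ whenever $c'$ appears with nonzero coefficient in $\partial^C c$; (inter-modular) module $d_1$ is connected to module $d_0$ whenever $d_0$ appears with nonzero coefficient in $\partial^D d_1$, and connected modules allow entangling operations between any qubit of one module and any qubit of the other. Let $\varphi$ be a connection assigning to each such pair $(d_1,d_0)$ an automorphism $\varphi(d_1,d_0)$ of the chain complex $C$ (permuting basis elements), and let $E = D\otimes_\varphi C$ be the fiber bundle complex with $E_n=\bigoplus_{p+q=n} D_p\otimes C_q$ and boundary $\partial^E=\partial_\varphi\oplus \mathrm{id}^D\otimes\partial^C$, where $\partial_\varphi(d_1\otimes c)=\sum_{d_0\in\partial^D d_1} d_0\otimes \varphi(d_1,d_0)(c)$ and $\partial_\varphi$ vanishes on $D_0\otimes C$. Let $\mathcal{E}$ be the CSS code obtained by choosing an index $i$ and taking basis elements of $E_i$ as data qubits, of $E_{i+1}$ as $Z$ checks and of $E_{i-1}$ as $X$ checks, with parity check matrices given by $\partial^E$. Assign each basis element $d\otimes c$ of $E$ to the qubit labelled $c$ in module $d$. Then $\mathcal{E}$ respects the connectivity constraints of the architecture: whenever a check and a data qubit are adjacent in the Tanner graph of $\mathcal{E}$,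 the corresponding physical qubits are connected, either within a module or between connected modules as specified above.
   Context: A chain complex is a sequence of vector spaces $C_i$ with linear maps $\partial_i:C_i\to C_{i-1}$ satisfying $\partial_i\partial_{i+1}=0$. A two-term complex represents a classical code with parity check matrix $\partial_1$; a three-term complex $C_{i+1}\to C_i\to C_{i-1}$ represents a CSS code with $H_Z^T=\partial_{i+1}$, $H_X=\partial_i$. Two qubits being ''connected'' means the architecture allows directly implementing two-qubit entangling operations between them. A code ''respects'' the connectivity constraints if one can associate a physical qubit to every parity check and data qubit of the code such that each parity check qubit is connected to the data qubits in its support. The notation $d_0\in\partial^D d_1$ means $d_0$ is a basis element appearing with nonzero coefficient in $\partial^D d_1$. *)

From HB Require Import structures.
From mathcomp Require Import all_boot all_order all_algebra all_fingroup.
Set Implicit Arguments. Unset Strict Implicit. Unset Printing Implicit Defensive.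
Import GRing.Theory.
Local Open Scope ring_scope.

(* A chain complex of finite-dimensional F_2-vector spaces with chosen bases:
   the union of all chosen bases is the finite type [B], [deg b] is the degree
   of the space containing the basis element [b], and [bd b b'] is the
   coefficient of [b'] in the boundary of [b]. *)
Definition is_chain_complex (B : finType) (deg : B -> nat) (bd : B -> B -> 'F_2) :=
  (forall b b', bd b b' != 0 -> deg b = (deg b').+1) /\
  (forall b b'', \sum_(b' : B) bd b b' * bd b' b'' = 0).

(* An automorphism of the complex permuting basis elements: a degree-preserving
   permutation sigma of the basis whose induced linear map commutes with the
   boundary, i.e. coefficient of sigma b' in bd (sigma b) = coefficient of b' in bd b. *)
Definition is_basis_perm_auto (B : finType) (deg : B -> nat) (bd : B -> B -> 'F_2)
  (sigma : {perm B}) :=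
  (forall b, deg (sigma b) = deg b) /\
  (forall b b', bd (sigma b) (sigma b') = bd b b').

(* Basis of D_1 (+) D_0 : inl = D_1, inr = D_0. *)
Definition Ddeg (D1 D0 : finType) (d : (D1 + D0)%type) : nat :=
  if d is inl _ then 1%N else 0%N.

(* Basis of E = D (x)_phi C : pairs (d, c), degree deg d + deg c. *)
Definition Edeg (D1 D0 C : finType) (degC : C -> nat) (e : ((D1 + D0) * C)%type) : nat :=
  (Ddeg e.1 + degC e.2)%N.

(* Boundary of the fiber bundle complex, as coefficients:
   bdE (d,c) (d',c') = coefficient of d' (x) c' in  d_phi(d (x) c) + (id (x) dC)(d (x) c).
   d_phi(d1 (x) c) = sum_{d0 in dD d1} d0 (x) phi d1 d0 c ; d_phi = 0 on D_0 (x) C. *)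
Definition bundle_bd (D1 D0 C : finType) (dD : D1 -> D0 -> 'F_2)
  (dC : C -> C -> 'F_2) (phi : D1 -> D0 -> {perm C})
  (e e' : ((D1 + D0) * C)%type) : 'F_2 :=
  (match e.1, e'.1 with
   | inl d1, inr d0 => dD d1 d0 * (if e'.2 == phi d1 d0 e.2 then 1 else 0)
   | _, _ => 0
   end)
  + (if e.1 == e'.1 then dC e.2 e'.2 else 0).

Definition modules_connected (D1 D0 : finType) (dD : D1 -> D0 -> 'F_2)
  (m m' : (D1 + D0)%type) : bool :=
  match m, m' with
  | inl d1, inr d0 => dD d1 d0 != 0
  | _, _ => false
  end.

(* Physical qubits: (module, label).  Two qubits are connected iff
   - same module and labels c, c' with c' in dC c (or c in dC c'), or
   - their modules are connected (any qubit to any qubit). *)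
Definition arch_connected (D1 D0 C : finType) (dD : D1 -> D0 -> 'F_2)
  (dC : C -> C -> 'F_2) (q q' : ((D1 + D0) * C)%type) : bool :=
  [|| (q.1 == q'.1) && ((dC q.2 q'.2 != 0) || (dC q'.2 q.2 != 0)),
      modules_connected dD q.1 q'.1 | modules_connected dD q'.1 q.1].

Definition assign (D1 D0 C : finType) (e : ((D1 + D0) * C)%type) :
  ((D1 + D0) * C)%type := (e.1, e.2).

(* Tanner graph of the CSS code from E at index i (data = E_i, Z checks = E_{i+1},
   X checks = E_{i-1}, H_Z^T = bd_{i+1}, H_X = bd_i):
   check [chk] adjacent to data qubit [q]. *)
Definition tanner_adj (T : finType) (deg : T -> nat) (bd : T -> T -> 'F_2)
  (i : nat) (chk q : T) : bool :=
  (deg q == i) &&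
  ( ((deg chk == i.+1) && (bd chk q != 0))
  || ((deg chk).+1 == i) && (bd q chk != 0) ).

From HB Require Import structures.
From mathcomp Require Import all_boot all_order all_algebra all_fingroup.
Import GRing.Theory.
Local Open Scope ring_scope.

(* A nonzero coefficient of the bundle boundary is either vertical (from
   [id ⊗ ∂^C], so it stays in one module and follows an edge of [∂^C]) or
   horizontal (from [∂_φ], so it goes from module [d1] to a module [d0] with
   [d0 ∈ ∂^D d1]).  A Tanner edge is a nonzero boundary coefficient in one of
   the two directions, and connectivity is symmetric, so every Tanner edge is
   realised by the architecture. *)

Section BundleBoundary.

Variables (D1 D0 C : finType) (dD : D1 -> D0 -> 'F_2) (dC : C -> C -> 'F_2).
Variable phi : D1 -> D0 -> {perm C}.

Lemma bundle_bd_neq0 (e e' : ((D1 + D0) * C)%type) :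
  bundle_bd dD dC phi e e' != 0 ->
  ((e.1 == e'.1) && (dC e.2 e'.2 != 0)) || modules_connected dD e.1 e'.1.
Proof.
case: e => [[d1|d0] c]; case: e' => [[d1'|d0'] c']; rewrite /bundle_bd /=.
- by rewrite add0r; case: ifP => // _ ->.
- by rewrite addr0; apply: contraNN => /eqP ->; rewrite mul0r.
- by [].
- by rewrite add0r; case: ifP => // _ ->.
Qed.

Lemma arch_connectedC (q q' : ((D1 + D0) * C)%type) :
  arch_connected dD dC q q' = arch_connected dD dC q' q.
Proof.
by rewrite /arch_connected eq_sym (orbC (dC q.2 _ != 0)) (orbC (modules_connected _ q.1 _)).
Qed.

Lemma arch_connected_bundle_bd (e e' : ((D1 + D0) * C)%type) :
  bundle_bd dD dC phi e e' != 0 -> arch_connected dD dC e e'.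
Proof.
rewrite /arch_connected => /bundle_bd_neq0 /orP[/andP[-> ->] // | ->].
by rewrite orbT.
Qed.

End BundleBoundary.

Lemma tanner_adj_bd_neq0 (T : finType) (deg : T -> nat) (bd : T -> T -> 'F_2)
    (i : nat) (chk q : T) :
  tanner_adj deg bd i chk q -> (bd chk q != 0) || (bd q chk != 0).
Proof. by case/andP=> _ /orP[/andP[_ ->] | /andP[_ ->]]; rewrite ?orbT. Qed.

Theorem theorem3 (D1 D0 C : finType) (dD : D1 -> D0 -> 'F_2)
  (degC : C -> nat) (dC : C -> C -> 'F_2)
  (HC : is_chain_complex degC dC)
  (HCterms : forall c : C, (degC c <= 2)%N)
  (phi : D1 -> D0 -> {perm C})
  (Hphi : forall (d1 : D1) (d0 : D0), dD d1 d0 != 0 ->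
            is_basis_perm_auto degC dC (phi d1 d0))
  (i : nat) (chk q : ((D1 + D0) * C)%type) :
  tanner_adj (Edeg degC) (bundle_bd dD dC phi) i chk q ->
  arch_connected dD dC (assign chk) (assign q).
Proof.
rewrite /assign -!surjective_pairing => /tanner_adj_bd_neq0 /orP[Hcq | Hqc].
- exact: arch_connected_bundle_bd Hcq.
- by rewrite arch_connectedC; exact: arch_connected_bundle_bd Hqc.
Qed.
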